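(* Consider a preferential (dynamic) attachment circuit of index $m\ge1$ (model described in the context). For $n\ge1$ let $W_{n-1}$, $B_{n-1}$ be the numbers of white and blue external nodes after $n-1$ insertions, and let $\mathcal{W}_{n-1,m}$, $\mathcal{B}_{n-1,m}$ be the numbers of white and blue external nodes after all $m$ parents of node $n$ have been chosen (not counting the external node of node $n$ itself). Then, for every $n$ with $(m+1)n\ge 5$, $$\mathbb{E}[\mathcal{W}^2_{n-1,m}\mid \mathbb{F}_{n-1,0}]=\frac{(m+1)(n-1)\bigl((mn-m+n-2)W_{n-1}+m\bigr)W_{n-1}}{(mn+n-2)(mn+n-1)},$$ $$\mathbb{E}[\mathcal{B}^2_{n-1,m}\mid \mathbb{F}_{n-1,0}]=\frac{(m+1)(n-1)\bigl(\mathcal{C}_1W_{n-1}^2+\mathcal{C}_2W_{n-1}B_{n-1}+\mathcal{C}_3B_{n-1}^2+\mathcal{C}_4W_{n-1}+\mathcal{C}_5B_{n-1}\bigr)}{(mn+n-4)(mn+n-3)(mn+n-2)(mn+n-1)},$$ where $\mathcal{C}_1=4m(m-1)(mn-m+n-2)$, $\mathcal{C}_2=4m(mn-m+n-3)(mn-m+n-2)$, $\mathcal{C}_3=(mn-m+n-4)(mn-m+n-3)(mn-m+n-2)$, $\mathcal{C}_4=4m(m^2n^2-m^2n+2mn^2+m^2-7mn+n^2+m-6n+10)$, $\mathcal{C}_5=2m(mn-m+n-2)(2mn-m+2n-7)$.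
   Context: Preferential (dynamic) attachment circuit of index $m\ge1$: at time $0$ there is a single node labeled $0$. At each time $n\ge1$ a new node labeled $n$ is added and $m$ parents are chosen for it one at a time, with replacement, among nodes $0,\dots,n-1$. Before the $(i+1)$-th choice ($i=0,\dots,m-1$), each existing node $v$ is chosen with probability $\frac{d_i(v)+1}{\sum_{x}(d_i(x)+1)}$, where $d_i(x)$ is the outdegree of $x$ in the current multigraph including the edges created by the first $i$ choices for node $n$; after each choice an edge from the chosen parent to node $n$ is immediately added (multi-edges allowed, counted with multiplicity). External nodes: a node of outdegree $s$ carries $s+1$ external nodes; they are colored white if the node has outdegree $0$, blue if it has outdegree $1$, red if it has outdegree $\ge2$. During the insertion of node $n$, after $s$ of the $m$ parent choices ($0\le s\le m$), $\mathcal{W}_{n-1,s}$ and $\mathcal{B}_{n-1,s}$ denote the numbers of white and blue external nodes carried by nodes $0,\dots,n-1$; thus $\mathcal{W}_{n-1,0}=W_{n-1}$, $\mathcal{B}_{n-1,0}=B_{n-1}$, and after the sample, node $n$ adds one white external node. $\mathbb{F}_{n-1,0}$ is the $\sigma$-field generated by the evolution of the circuit up to the completion of the insertion of node $n-1$. *)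

From mathcomp Require Import all_boot all_order all_algebra.
Set Implicit Arguments. Unset Strict Implicit. Unset Printing Implicit Defensive.
Import Order.TTheory GRing.Theory Num.Theory.
Local Open Scope ring_scope.

(* A history of the preferential attachment circuit after k insertions is
   h : seq (seq nat) of size k, where h`_j (j < k) is the sequence (in order
   of choice) of the parents chosen for node j.+1.  Nodes are 0..k. *)

Definition nnodes (h : seq (seq nat)) : nat := (size h).+1.

Definition valid_history (m : nat) (h : seq (seq nat)) : bool :=
  all (fun j => (size (nth [::] h j) == m) && all (fun v => v <= j)%N (nth [::] h j))
      (iota 0 (size h)).

Definition outdeg (h : seq (seq nat)) (ps : seq nat) (v : nat) : nat :=
  (sumn [seq count_mem v p | p <- h] + count_mem v ps)%N.

Definition total_weight (h : seq (seq nat)) (ps : seq nat) : nat :=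
  (\sum_(x < nnodes h) (outdeg h ps x).+1)%N.

Definition choice_prob (R : fieldType) (h : seq (seq nat)) (ps : seq nat) (v : nat) : R :=
  ((outdeg h ps v).+1)%:R / (total_weight h ps)%:R.

Fixpoint choice_expect (R : fieldType) (h : seq (seq nat)) (k : nat) (ps : seq nat)
    (f : seq nat -> R) : R :=
  match k with
  | 0%N => f ps
  | k'.+1 => \sum_(v < nnodes h) @choice_prob R h ps v * @choice_expect R h k' (rcons ps v) f
  end.

(* White external nodes among nodes 0..size h: nodes of outdegree 0 (one each). *)
Definition whites (h : seq (seq nat)) (ps : seq nat) : nat :=
  count (fun v => outdeg h ps v == 0%N) (iota 0 (nnodes h)).

(* Blue external nodes: nodes of outdegree 1 carry 2 external nodes each. *)
Definition blues (h : seq (seq nat)) (ps : seq nat) : nat :=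
  (2 * count (fun v => outdeg h ps v == 1%N) (iota 0 (nnodes h)))%N.

From mathcomp Require Import all_boot all_order all_algebra.
From mathcomp Require Import ring lra zify.
Set Implicit Arguments. Unset Strict Implicit. Unset Printing Implicit Defensive.
Import Order.TTheory GRing.Theory Num.Theory.

(* Only the numbers w, b of white and blue external nodes and the total weight
   t of the circuit matter.  A parent of outdegree 0 (chosen with probability
   w/t) loses its white external node and gets two blue ones; a parent of
   outdegree 1 (probability b/t) turns its two blue external nodes into three
   red ones; any other parent just gets one more red external node; in every
   case t grows by 1.  So the conditional expectation of g(W, B) after the m
   choices is computed by the recursion [urn_expect].
   A quadratic q with w q(w-1,b+2) + b q(w,b-2) = (w+b-j) q(w,b) is multiplied
   in expectation by (t-j)/t at each step, hence by the ratio of falling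
   factorials (t-1)_j / (t+m-1)_j over m steps.  Both w^2 and b^2 split into
   such eigenfunctions, with j <= 2 and j <= 4 respectively, and for a valid
   history t = mn - m + n, which gives the two formulas. *)

Lemma sumn_map_iota0 N (F : nat -> nat) :
  sumn [seq F x | x <- iota 0 N] = \sum_(x < N) F x.
Proof. by rewrite sumnE big_map -(big_mkord xpredT) /index_iota subn0. Qed.

Section Outdegrees.
Variable h : seq (seq nat).
Implicit Type ps : seq nat.

Lemma whitesE ps : whites h ps = \sum_(x < nnodes h) (outdeg h ps x == 0).
Proof. by rewrite /whites -sumn_count sumn_map_iota0. Qed.

Lemma bluesE ps : blues h ps = 2 * \sum_(x < nnodes h) (outdeg h ps x == 1).
Proof. by rewrite /blues -sumn_count sumn_map_iota0. Qed.

Lemma outdeg_rcons ps v x : outdeg h (rcons ps v) x = outdeg h ps x + (v == x).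
Proof. by rewrite /outdeg -cats1 count_cat /= addn0 addnA. Qed.

Lemma big_outdeg_rcons ps (v : 'I_(nnodes h)) (F : nat -> nat) :
  \sum_(x < nnodes h) F (outdeg h (rcons ps v) x) + F (outdeg h ps v)
  = \sum_(x < nnodes h) F (outdeg h ps x) + F (outdeg h ps v).+1.
Proof.
rewrite (bigD1 v) //= [in RHS](bigD1 v) //= outdeg_rcons eqxx addn1.
rewrite (eq_bigr (fun x : 'I_(nnodes h) => F (outdeg h ps x))) => [|x /negbTE xv]; first lia.
by rewrite outdeg_rcons (inj_eq val_inj) eq_sym xv addn0.
Qed.

Lemma total_weight_rcons ps (v : 'I_(nnodes h)) :
  total_weight h (rcons ps v) = (total_weight h ps).+1.
Proof. by have := big_outdeg_rcons ps v succn; rewrite /total_weight; lia. Qed.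

Lemma whites_rcons ps (v : 'I_(nnodes h)) :
  whites h (rcons ps v) + (outdeg h ps v == 0) = whites h ps.
Proof.
by have /= := big_outdeg_rcons ps v (fun d => (d == 0 : nat)); rewrite !whitesE addn0.
Qed.

Lemma blues_rcons ps (v : 'I_(nnodes h)) :
  blues h (rcons ps v) + 2 * (outdeg h ps v == 1) = blues h ps + 2 * (outdeg h ps v == 0).
Proof.
by have /= := big_outdeg_rcons ps v (fun d => (d == 1 : nat)); rewrite !bluesE -!mulnDr => ->.
Qed.

End Outdegrees.

Lemma valid_history_mem m h p : valid_history m h -> p \in h ->
  (size p == m) && all (fun v => v < nnodes h) p.
Proof.
move=> /allP valid /(nthP [::]) [j jh <-].
have /valid/andP [-> /allP le_j] : j \in iota 0 (size h) by rewrite mem_iota.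
by apply/allP => v /le_j vj; rewrite ltnS (leq_trans vj (ltnW jh)).
Qed.

Lemma sum_count_mem_ord N s : all (fun v => v < N) s ->
  \sum_(x < N) count_mem (x : nat) s = size s.
Proof.
elim: s => [|v s IH] /=; first by rewrite big1.
move=> /andP [vN sN]; rewrite big_split /= IH // (bigD1 (Ordinal vN)) //= eqxx big1 // => x.
move=> xv; apply/eqP; rewrite eqb0; apply: contra xv => /eqP vx.
by apply/eqP/val_inj; rewrite /= vx.
Qed.

Lemma total_weight_valid m h : valid_history m h ->
  total_weight h [::] = size h * m + (size h).+1.
Proof.
move=> valid; rewrite /total_weight.
under eq_bigr => x _ do rewrite /outdeg addn0 -addn1 sumnE big_map.
rewrite big_split sum1_card card_ord exchange_big /=; congr (_ + _).
rewrite big_seq_cond (eq_bigr (fun _ => m)) => [|p /andP [ph _]].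
  by rewrite -big_seq_cond big_const_seq count_predT iter_addn_0 mulnC.
by have /andP [/eqP <- /sum_count_mem_ord] := valid_history_mem valid ph.
Qed.

Local Open Scope ring_scope.

Section UrnChain.
Variable R : fieldType.
Implicit Types (g q : R -> R -> R) (w b t : R).

Lemma weighted_next_state h ps (v : 'I_(nnodes h)) (E : R -> R -> R) :
  let W := (whites h ps)%:R in let B := (blues h ps)%:R in let d := outdeg h ps v in
  d.+1%:R * E (whites h (rcons ps v))%:R (blues h (rcons ps v))%:R
  = (d == 0%N)%:R * E (W - 1) (B + 2) + (d == 1%N)%:R * 2 * E W (B - 2)
    + (d.+1%:R - (d == 0%N)%:R - (d == 1%N)%:R * 2) * E W B.
Proof.
move=> W B d; rewrite {}/d.
have -> : (whites h (rcons ps v))%:R = W - (outdeg h ps v == 0%N)%:R.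
  by rewrite /W -(whites_rcons ps v) (natrD _ (whites h _)) addrK.
have -> : (blues h (rcons ps v))%:R
          = B + (outdeg h ps v == 0%N)%:R * 2 - (outdeg h ps v == 1%N)%:R * 2.
  rewrite -[(blues h _)%:R](addrK ((2 * (outdeg h ps v == 1%N))%:R)).
  by rewrite -(natrD _ (blues h _)) blues_rcons (natrD _ (blues h ps)) -/B !natrM !(mulrC 2%:R).
by case: (outdeg h ps v) => [|[|d]] /=; rewrite ?(mul1r, mul0r, subr0, addr0); ring.
Qed.

Fixpoint urn_expect g (k : nat) w b t : R :=
  if k is k'.+1 then
    (w * urn_expect g k' (w - 1) (b + 2) (t + 1)
     + b * urn_expect g k' w (b - 2) (t + 1)
     + (t - w - b) * urn_expect g k' w b (t + 1)) / t
  else g w b.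

Lemma choice_expect_urn h k ps (g : R -> R -> R) :
  choice_expect h k ps (fun ps => g (whites h ps)%:R (blues h ps)%:R)
  = urn_expect g k (whites h ps)%:R (blues h ps)%:R (total_weight h ps)%:R.
Proof.
elim: k ps => [|k IH] ps //=.
set t := total_weight h ps; set W := whites h ps; set B := blues h ps.
have sumW : \sum_(v < nnodes h) (outdeg h ps v == 0%N)%:R = W%:R :> R.
  by rewrite -natr_sum -whitesE.
have sumB : (\sum_(v < nnodes h) (outdeg h ps v == 1%N)%:R) * 2 = B%:R :> R.
  by rewrite -natr_sum /B bluesE natrM mulrC.
have sumt : \sum_(v < nnodes h) (outdeg h ps v).+1%:R = t%:R :> R.
  by rewrite -natr_sum.
pose E w b := urn_expect g k w b (t%:R + 1).
under eq_bigr => v _ do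
  rewrite IH total_weight_rcons -/t -natr1 /choice_prob -/t mulrAC (@weighted_next_state _ _ v E).
by rewrite -mulr_suml !big_split /= -!mulr_suml !sumrB sumW sumB -mulr_suml sumB sumt.
Qed.

Lemma eq_urn_expect g1 g2 k w b t : (forall w b, g1 w b = g2 w b) ->
  urn_expect g1 k w b t = urn_expect g2 k w b t.
Proof. by move=> eq_g; elim: k w b t => [|k IH] w b t /=; rewrite ?IH. Qed.

Lemma urn_expectD g1 g2 k w b t :
  urn_expect (fun w b => g1 w b + g2 w b) k w b t
  = urn_expect g1 k w b t + urn_expect g2 k w b t.
Proof. by elim: k w b t => [|k IH] w b t //=; rewrite !IH; ring. Qed.

Definition falling (x : R) (j : nat) : R := \prod_(i < j) (x - i%:R).

Lemma falling0 x : falling x 0 = 1.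
Proof. exact: big_ord0. Qed.

Lemma fallingS x j : falling x j.+1 = x * falling (x - 1) j.
Proof.
rewrite /falling big_ord_recl subr0; congr (_ * _).
by apply: eq_bigr => i _; rewrite /bump /= -nat1r opprD addrA.
Qed.

Lemma fallingSr x j : falling x j.+1 = falling x j * (x - j%:R).
Proof. by rewrite /falling big_ord_recr. Qed.

Definition urn_eigen q (j : nat) :=
  forall w b, w * q (w - 1) (b + 2) + b * q w (b - 2) = (w + b - j%:R) * q w b.

Definition eigen_decay t (k j : nat) := falling (t - 1) j / falling (t + k%:R - 1) j.

Lemma eigen_decayS t k j : t != 0 ->
  eigen_decay t k.+1 j = (t - j%:R) / t * eigen_decay (t + 1) k j.
Proof.
move=> t0; rewrite /eigen_decay addrK -(addrA t 1) nat1r mulrA; congr (_ / _).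
by rewrite mulrAC [_ * falling _ _]mulrC -fallingSr fallingS mulrC mulKf.
Qed.

Lemma urn_expect_eigen q j k w b t : urn_eigen q j ->
  (forall i, (i < k)%N -> t + i%:R != 0) -> falling (t + k%:R - 1) j != 0 ->
  urn_expect q k w b t = q w b * eigen_decay t k j.
Proof.
move=> eig_q; elim: k w b t => [|k IH] w b t t_ne0 den_ne0 /=.
  by rewrite /eigen_decay addr0 in den_ne0 *; rewrite divff ?mulr1.
have t0 : t != 0 by have := t_ne0 0%N; rewrite addr0; apply.
have t1_ne0 i : (i < k)%N -> t + 1 + i%:R != 0.
  by move=> ik; rewrite -addrA nat1r t_ne0.
have den1_ne0 : falling (t + 1 + k%:R - 1) j != 0.
  by rewrite -(addrA t 1) nat1r.
rewrite !IH // (mulrA w) (mulrA b) (mulrA (t - w - b)) -!mulrDl eig_q eigen_decayS //.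
by field.
Qed.
End UrnChain.

Section UrnMoments.
Variable R : realFieldType.
Implicit Types (q : R -> R -> R) (w b t : R).

Lemma falling_gt0 (x : R) j : j%:R - 1 < x -> 0 < falling x j.
Proof.
move=> jx; apply: prodr_gt0 => i _.
have : i.+1%:R <= j%:R :> R by rewrite ler_nat.
rewrite -natr1; lra.
Qed.

Lemma urn_expect_eigen_pos q j k w b t : urn_eigen q j -> 0 < t -> j%:R < t + k%:R ->
  urn_expect q k w b t = q w b * eigen_decay t k j.
Proof.
move=> eig_q t_gt0 jtk; apply: urn_expect_eigen => // [i _|].
  by rewrite lt0r_neq0 // ltr_wpDr.
by rewrite lt0r_neq0 // falling_gt0 // ltrBlDr subrK.
Qed.

Lemma urn_expect_whites_sqr k w b t : 0 < t -> 2 < t + k%:R ->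
  urn_expect (fun w _ => w ^+ 2) k w b t
  = w * (w - 1) * eigen_decay t k 2 + w * eigen_decay t k 1.
Proof.
move=> t_gt0 tk.
have eig1 : urn_eigen (fun w _ => w) 1 by move=> ? ?; ring.
have eig2 : urn_eigen (fun w _ => w * (w - 1)) 2 by move=> ? ?; ring.
rewrite (@eq_urn_expect _ _ (fun w b => w * (w - 1) + w)) => [|? ?]; last by ring.
by rewrite urn_expectD (urn_expect_eigen_pos _ _ eig2) ?(urn_expect_eigen_pos _ _ eig1) //; lra.
Qed.

Lemma urn_expect_blues_sqr k w b t : 0 < t -> 4 < t + k%:R ->
  urn_expect (fun _ b => b ^+ 2) k w b t
  = ((b - 2 * w) ^+ 2 - 2 * b - 4 * w) * eigen_decay t k 4
    + 4 * w * (b - 2 * w + 2) * eigen_decay t k 3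
    + (4 * w * (w - 1) + 2 * (b - 2 * w)) * eigen_decay t k 2
    + 4 * w * eigen_decay t k 1.
Proof.
move=> t_gt0 tk.
pose q1 w (b : R) := 4 * w.
pose q2 w b := 4 * w * (w - 1) + 2 * (b - 2 * w).
pose q3 w b := 4 * w * (b - 2 * w + 2).
pose q4 w b := (b - 2 * w) ^+ 2 - 2 * b - 4 * w.
have eig1 : urn_eigen q1 1 by move=> ? ?; rewrite /q1; ring.
have eig2 : urn_eigen q2 2 by move=> ? ?; rewrite /q2; ring.
have eig3 : urn_eigen q3 3 by move=> ? ?; rewrite /q3; ring.
have eig4 : urn_eigen q4 4 by move=> ? ?; rewrite /q4; ring.
rewrite (@eq_urn_expect _ _ (fun w b => q4 w b + q3 w b + q2 w b + q1 w b)) => [|? ?]; last first.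
  by rewrite /q1 /q2 /q3 /q4; ring.
rewrite 3!urn_expectD (urn_expect_eigen_pos _ _ eig4) ?(urn_expect_eigen_pos _ _ eig3)
  ?(urn_expect_eigen_pos _ _ eig2) ?(urn_expect_eigen_pos _ _ eig1) //; lra.
Qed.
End UrnMoments.

Theorem proposition2 (R : realFieldType) (m n : nat) (h : seq (seq nat)) :
  (1 <= m)%N -> (1 <= n)%N -> (5 <= (m + 1) * n)%N ->
  size h = n.-1 -> valid_history m h ->
  let W : R := (whites h [::])%:R in
  let B : R := (blues h [::])%:R in
  let mr : R := m%:R in
  let nr : R := n%:R in
  let C1 := 4 * mr * (mr - 1) * (mr * nr - mr + nr - 2) in
  let C2 := 4 * mr * (mr * nr - mr + nr - 3) * (mr * nr - mr + nr - 2) in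
  let C3 := (mr * nr - mr + nr - 4) * (mr * nr - mr + nr - 3) * (mr * nr - mr + nr - 2) in
  let C4 := 4 * mr * (mr ^+ 2 * nr ^+ 2 - mr ^+ 2 * nr + 2 * mr * nr ^+ 2 + mr ^+ 2
                      - 7 * mr * nr + nr ^+ 2 + mr - 6 * nr + 10) in
  let C5 := 2 * mr * (mr * nr - mr + nr - 2) * (2 * mr * nr - mr + 2 * nr - 7) in
  @choice_expect R h m [::] (fun ps => ((whites h ps)%:R : R) ^+ 2)
    = (mr + 1) * (nr - 1) * ((mr * nr - mr + nr - 2) * W + mr) * W
      / ((mr * nr + nr - 2) * (mr * nr + nr - 1))
  /\
  @choice_expect R h m [::] (fun ps => ((blues h ps)%:R : R) ^+ 2)
    = (mr + 1) * (nr - 1) * (C1 * W ^+ 2 + C2 * W * B + C3 * B ^+ 2 + C4 * W + C5 * B)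
      / ((mr * nr + nr - 4) * (mr * nr + nr - 3) * (mr * nr + nr - 2) * (mr * nr + nr - 1)).
Proof.
move=> m_gt0 n_gt0 mn_ge5 size_h valid W B mr nr C1 C2 C3 C4 C5.
have weight_end : (total_weight h [::] + m = (m + 1) * n)%N.
  by rewrite (total_weight_valid valid) size_h -subn1; nia.
rewrite (choice_expect_urn _ _ _ (fun w _ => w ^+ 2)).
rewrite (choice_expect_urn _ _ _ (fun _ b => b ^+ 2)) -/W -/B.
set t : R := (total_weight h [::])%:R.
have t_gt0 : 0 < t by rewrite ltr0n (total_weight_valid valid) addnS.
have tm : t + mr = mr * nr + nr by rewrite -natrD weight_end natrM natrD mulrDl mul1r.
have T_gt4 : 4 < mr * nr + nr by rewrite -tm -natrD weight_end ltr_nat.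
rewrite urn_expect_whites_sqr ?urn_expect_blues_sqr -/mr ?tm //; try lra.
rewrite /eigen_decay -/mr tm.
have -> : t = mr * nr - mr + nr by rewrite -[t](addrK mr) tm; ring.
rewrite !fallingS !falling0 /C1 /C2 /C3 /C4 /C5 /mr /nr in T_gt4 *.
by split; field; rewrite ?lt0r_neq0 //; lra.
Qed.
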